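(* Let $(\mathcal G_A,p^A)$ and $(\mathcal G_B,p^B)$ be CPS's on the finite set $\Omega$ (satisfying the standing assumptions), each satisfying certainty reflection and being $1$-closed. Fix an event $E$ and a state $\omega$ with $\omega\in E$. If $E$ is common certainty at $\omega$ (i.e., $\omega\in C^\infty$ computed with $q_A=q_B=1$), then $E$ is common knowledge at $\omega$ (i.e., $\omega\in K^\infty$ computed with $q_A=q_B=1$).
   Context: $\Omega$ is a finite set; every subset is an event. A CPS is a pair $(\mathcal G,p)$ where $\mathcal G$ is a family of nonempty subsets of $\Omega$ and $p$ assigns to each $G\in\mathcal G$ a probability measure $p_G$ on $\Omega$ with $p_G(G)=1$ and $p_G(E)=p_G(F)p_F(E)$ whenever $E\subseteq F\subseteq G$, $F,G\in\mathcal G$. Standing assumption: each conditioning family is closed under unions and nonempty intersections and covers $\Omega$. Atom: $m_i(\omega)=\bigcap\{G\in\mathcal G_i:\omega\in G\}$. $(\mathcal G_i,p^i)$ is $1$-closed if every $L\subseteq G$ with $G\in\mathcal G_i$ and $p^i_G(L)=1$ belongs to $\mathcal G_i$. Certainty reflection: for every event $E$, $q\in[0,1]$, $\omega$: $p^i_{m_i(\omega)}(E)=q$ implies $p^i_{m_i(\omega)}(\{\omega':p^i_{m_i(\omega')}(E)=q\})=1$. $C_i(F)=\{\omega:p^i_{m_i(\omega)}(F)=1\}$ and $K_i(F)=\{\omega: m_i(\omega)\subseteq F\}$. With $q_A=q_B=1$: $A^0=\{\omega:p^A_{m_A(\omega)}(E)=1\}$, $B^0=\{\omega:p^B_{m_B(\omega)}(E)=1\}$;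 $A^{n+1}=A^n\cap C_A(B^n)$, $B^{n+1}=B^n\cap C_B(A^n)$, $C^\infty=\bigcap_nA^n\cap\bigcap_nB^n$; and $A^{K,0}=A^0$, $B^{K,0}=B^0$, $A^{K,n+1}=A^{K,n}\cap K_A(B^{K,n})$, $B^{K,n+1}=B^{K,n}\cap K_B(A^{K,n})$, $K^\infty=\bigcap_nA^{K,n}\cap\bigcap_nB^{K,n}$. *)

From HB Require Import structures.
From mathcomp Require Import all_boot all_order all_algebra.
Set Implicit Arguments. Unset Strict Implicit. Unset Printing Implicit Defensive.
Import Order.TTheory GRing.Theory Num.Theory.
Local Open Scope ring_scope.

Section CPSDefs.
Variables (R : realFieldType) (T : finType).

(* A family of conditional probability measures: p G is the point-mass
   function of the measure p_G (only meaningful for G in the family). *)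
Definition prob (p : {set T} -> {ffun T -> R}) (G E : {set T}) : R :=
  \sum_(x in E) p G x.

Record is_CPS (fam : {set {set T}}) (p : {set T} -> {ffun T -> R}) : Prop := {
  cps_nonempty : forall G, G \in fam -> G != set0;
  cps_nonneg : forall G, G \in fam -> forall x, 0 <= p G x;
  cps_total : forall G, G \in fam -> \sum_(x : T) p G x = 1;
  cps_support : forall G, G \in fam -> prob p G G = 1;
  cps_chain : forall E F G : {set T}, F \in fam -> G \in fam -> E \subset F -> F \subset G ->
          prob p G E = prob p G F * prob p F E;
  (* standing assumptions *)
  cps_union : forall F G, F \in fam -> G \in fam -> F :|: G \in fam;
  cps_inter : forall F G, F \in fam -> G \in fam -> F :&: G != set0 -> F :&: G \in fam;
  cps_cover : forall w, exists2 G, G \in fam & w \in G }.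

Definition atom (fam : {set {set T}}) (w : T) : {set T} :=
  \bigcap_(G in fam | w \in G) G.

Definition one_closed (fam : {set {set T}}) (p : {set T} -> {ffun T -> R}) : Prop :=
  forall G L : {set T}, G \in fam -> L \subset G -> prob p G L = 1 -> L \in fam.

Definition certainty_reflection (fam : {set {set T}}) (p : {set T} -> {ffun T -> R}) : Prop :=
  forall (E : {set T}) (q : R) (w : T),
    prob p (atom fam w) E = q ->
    prob p (atom fam w) [set w' | prob p (atom fam w') E == q] = 1.

Definition Cert (fam : {set {set T}}) (p : {set T} -> {ffun T -> R}) (F : {set T}) : {set T} :=
  [set w | prob p (atom fam w) F == 1].

Definition Know (fam : {set {set T}}) (F : {set T}) : {set T} :=
  [set w | atom fam w \subset F].

Fixpoint iter_pair (opA opB : {set T} -> {set T}) (A0 B0 : {set T}) (n : nat)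
  : {set T} * {set T} :=
  match n with
  | 0%N => (A0, B0)
  | k.+1 => let: (a, b) := iter_pair opA opB A0 B0 k in
            (a :&: opA b, b :&: opB a)
  end.

Definition certain_set (fam : {set {set T}}) (p : {set T} -> {ffun T -> R}) (E : {set T}) :=
  Cert fam p E.

Definition common_certainty famA pA famB pB (E : {set T}) (w : T) : Prop :=
  forall n, let AB := iter_pair (Cert famA pA) (Cert famB pB)
                        (certain_set famA pA E) (certain_set famB pB E) n in
            w \in AB.1 /\ w \in AB.2.

(* w ∈ K^∞ for E with q_A = q_B = 1 (A^{K,0} = A^0, B^{K,0} = B^0) *)
Definition common_knowledge famA pA famB pB (E : {set T}) (w : T) : Prop :=
  forall n, let AB := iter_pair (Know famA) (Know famB)
                        (certain_set famA pA E) (certain_set famB pB E) n in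
            w \in AB.1 /\ w \in AB.2.

End CPSDefs.

From mathcomp Require Import all_boot all_order all_algebra.
Set Implicit Arguments. Unset Strict Implicit. Unset Printing Implicit Defensive.
Import Order.TTheory GRing.Theory Num.Theory.
Local Open Scope ring_scope.

(* Under 1-closedness, an agent certain at [x] of an event containing [x]
   knows it: the event meets the atom [m(x)] in a set of conditional
   probability 1, which therefore belongs to the family and contains [m(x)].
   Certainty reflection makes every [C_A(F)] a union of A-atoms, hence so is
   every iterate [A^n].  Applied to both agents, this shows that the common
   certainty set is closed under both agents' atoms, and an induction on [n]
   puts it inside every [A^{K,n}] and [B^{K,n}]. *)

Definition atom_closed (T : finType) (fam : {set {set T}}) (S : {set T}) : Prop :=
  forall x, x \in S -> atom fam x \subset S.

Section OneAgent.
Variables (R : realFieldType) (T : finType).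
Variables (fam : {set {set T}}) (p : {set T} -> {ffun T -> R}).
Hypothesis cps : is_CPS fam p.

Lemma cps_mass_out (G : {set T}) y : G \in fam -> y \notin G -> p G y = 0.
Proof.
move=> famG yG.
have mass_outside : \sum_(i | i \notin G) p G i = 0.
  have := cps_total cps famG; rewrite (bigID (mem G)) /=.
  move: (cps_support cps famG); rewrite /prob => ->.
  by move=> /(congr1 (fun s => s - 1)); rewrite addrC addrK subrr.
apply: (psumr_eq0P _ mass_outside) yG => i _; exact: (cps_nonneg cps famG i).
Qed.

Lemma prob_setIr (G F : {set T}) : G \in fam -> prob p G (F :&: G) = prob p G F.
Proof.
move=> famG; rewrite /prob [RHS](big_setID G) /= [X in _ + X]big1 ?addr0 //.
by move=> y; rewrite inE => /andP[yG _]; apply: cps_mass_out.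
Qed.

Lemma mem_atom x : x \in atom fam x.
Proof. by apply/bigcapP => G /andP[]. Qed.

Lemma atom_sub (G : {set T}) x : G \in fam -> x \in G -> atom fam x \subset G.
Proof. by move=> famG xG; apply: bigcap_inf; rewrite famG xG. Qed.

Lemma atom_in_fam x : atom fam x \in fam.
Proof.
have [G famG xG] := cps_cover cps x.
pose in_fam_or_full (S : {set T}) := x \in S /\ (S = setT \/ S \in fam).
have : in_fam_or_full (atom fam x).
  apply: big_ind => [| S1 S2 [xS1 S1P] [xS2 S2P] | S /andP[famS xS]].
  - by split; [rewrite inE | left].
  - split; first by rewrite inE xS1 xS2.
    case: S1P S2P => [->|famS1] [->|famS2]; rewrite ?setTI ?setIT; auto.
    right; apply: (cps_inter cps famS1 famS2).
    by apply/set0Pn; exists x; rewrite inE xS1 xS2.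
  - by split; [|right].
case=> _ [atomT | //].
suff -> : atom fam x = G by [].
by rewrite atomT; apply/eqP; rewrite eq_sym -subTset -atomT atom_sub.
Qed.

Hypothesis closed1 : one_closed fam p.

Lemma atom_sub_certain x (F : {set T}) :
  x \in F -> prob p (atom fam x) F = 1 -> atom fam x \subset F.
Proof.
move=> xF certF.
have famFI : F :&: atom fam x \in fam.
  apply: closed1 _ _ (atom_in_fam x) (subsetIr _ _) _.
  by rewrite prob_setIr // atom_in_fam.
apply: subset_trans (subsetIl F (atom fam x)).
by apply: atom_sub famFI _; rewrite inE xF mem_atom.
Qed.

Hypothesis reflect1 : certainty_reflection fam p.

Lemma Cert_atom_closed (F : {set T}) : atom_closed fam (Cert fam p F).
Proof.
move=> x xC; apply: atom_sub_certain => //.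
by move: xC; rewrite inE => /eqP /reflect1.
Qed.

End OneAgent.

Section Iterates.
Variable T : finType.
Variables (opA opB : {set T} -> {set T}) (A0 B0 : {set T}).

Lemma iter_pairS n :
  iter_pair opA opB A0 B0 n.+1 =
  let AB := iter_pair opA opB A0 B0 n in (AB.1 :&: opA AB.2, AB.2 :&: opB AB.1).
Proof. by rewrite /=; case: iter_pair. Qed.

Lemma iter_pair_swap n :
  iter_pair opB opA B0 A0 n =
  ((iter_pair opA opB A0 B0 n).2, (iter_pair opA opB A0 B0 n).1).
Proof. by elim: n => //= n ->; case: iter_pair. Qed.

End Iterates.

Lemma common_certainty_sym (R : realFieldType) (T : finType)
    famA famB (pA pB : {set T} -> {ffun T -> R}) E x :
  common_certainty famB pB famA pA E x <-> common_certainty famA pA famB pB E x.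
Proof.
by split=> cc n; have := cc n; rewrite /= iter_pair_swap /= => -[].
Qed.

Section CertaintyPropagation.
Variables (R : realFieldType) (T : finType).
Variables (famA famB : {set {set T}}) (pA pB : {set T} -> {ffun T -> R}).
Variable E : {set T}.
Hypotheses (cpsA : is_CPS famA pA) (closedA : one_closed famA pA)
  (reflectA : certainty_reflection famA pA).

Let IC := iter_pair (Cert famA pA) (Cert famB pB)
  (certain_set famA pA E) (certain_set famB pB E).

Lemma iter_Cert_atom_closed n : atom_closed famA (IC n).1.
Proof.
elim: n => [|n IHn]; first exact: Cert_atom_closed.
move=> x; rewrite /IC iter_pairS -/IC inE => /andP[xA xC].
by rewrite subsetI IHn // Cert_atom_closed.
Qed.

Lemma common_certainty_atom x y :
  common_certainty famA pA famB pB E x -> y \in atom famA x ->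
  common_certainty famA pA famB pB E y.
Proof.
move=> ccx yx n; have [_ xB] := ccx n; have [+ _] := ccx n.+1.
rewrite iter_pairS /= inE => /andP[xA xCB].
split; first exact: (subsetP (iter_Cert_atom_closed xA) y yx).
apply: (subsetP (atom_sub_certain cpsA closedA xB _) y yx).
by move: xCB; rewrite inE => /eqP.
Qed.

End CertaintyPropagation.

Lemma common_certainty_knowledge (R : realFieldType) (T : finType)
    famA famB (pA pB : {set T} -> {ffun T -> R}) E :
  is_CPS famA pA -> is_CPS famB pB ->
  certainty_reflection famA pA -> certainty_reflection famB pB ->
  one_closed famA pA -> one_closed famB pB ->
  forall x, common_certainty famA pA famB pB E x ->
  common_knowledge famA pA famB pB E x.
Proof.
move=> cpsA cpsB reflA reflB closedA closedB x ccx n.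
elim: n x ccx => [|n IHn] x ccx; first exact: ccx 0%N.
rewrite iter_pairS /= !inE.
have [-> ->] := IHn x ccx; split; apply/subsetP => y yx.
- by have [] := IHn y (common_certainty_atom cpsA closedA reflA ccx yx).
- have /common_certainty_sym ccBA := ccx.
  have /common_certainty_sym ccy := common_certainty_atom cpsB closedB reflB ccBA yx.
  by have [] := IHn y ccy.
Qed.

Theorem theorem4 (R : realFieldType) (T : finType)
  (famA famB : {set {set T}}) (pA pB : {set T} -> {ffun T -> R})
  (E : {set T}) (w : T) :
  is_CPS famA pA -> is_CPS famB pB ->
  certainty_reflection famA pA -> certainty_reflection famB pB ->
  one_closed famA pA -> one_closed famB pB ->
  w \in E ->
  common_certainty famA pA famB pB E w ->
  common_knowledge famA pA famB pB E w.
Proof.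
(* [w \in E] is redundant: both iterations start from [A^0] and [B^0]. *)
move=> cpsA cpsB reflA reflB closedA closedB _.
exact: common_certainty_knowledge.
Qed.
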